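(* Let $\pi$ be a propositional formula and $\varphi$ an arbitrary formula. Then (1) the formula $\lnot\Box\pi\to(\varphi\leftrightarrow[\dagger'\pi]\varphi)$ is valid (true at every world of every model); but (2) the formula $\lnot\Box\pi\to(\varphi\leftrightarrow[\dagger\pi]\varphi)$ is not necessarily valid, i.e. there exist a propositional $\pi$ and a formula $\varphi$ for which it is not valid.
   Context: Fix a countable non-empty set $\mathit{At}$ of atoms. Formulas are built from $\top$, atoms, $\lnot$, $\land$, $\Box$ and, for each propositional $\pi$, operators $[\dagger\pi]$ and $[\dagger'\pi]$. A model is $\mathcal{M}=\langle W,R,V\rangle$, $W\neq\varnothing$, $R\subseteq W\times W$ arbitrary, $V:\mathit{At}\to\mathcal{P}(W)$, with standard Kripke semantics for $\Box$. A literal is an atom or its negation; a clause is a finite set $D$ of literals read as $\bigvee D$ ($\bigvee\varnothing:=\bot$), tautological if it contains $p$ and $\lnot p$ for some $p$. For propositional $\pi$, $\mathcal{C}(\pi)$ is the set of non-tautological clauses $D$ with $\models\pi\to\bigvee D$ and no $D'\subsetneq D$ with $\models\pi\to\bigvee D'$. For a model $\mathcal{M}$ and a non-tautological clause $D$, $\mathcal{M}^{(D)}_u=\langle W',R',V'\rangle$ has $W'=W\times\{0,1\}$, $(w,i)R'(v,j)$ iff $wRv$, $(w,0)\in V'(p)$ iff $w\in V(p)$, and $(w,1)\in V'(p)$ iff $\lnot p\in D$, or $\{p,\lnot p\}\cap D=\varnothing$ and $w\in V(p)$. Semantics: $\mathcal{M},w\models[\dagger\pi]\varphi$ iff for all $D\in\mathcal{C}(\pi)$,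 $\mathcal{M}^{(D)}_u,(w,0)\models\varphi$. Conditional forgetting: $\mathcal{M},w\models[\dagger'\pi]\varphi$ iff either $\mathcal{M},w\models\Box\pi$ and for all $D\in\mathcal{C}(\pi)$, $\mathcal{M}^{(D)}_u,(w,0)\models\varphi$; or $\mathcal{M},w\not\models\Box\pi$ and $\mathcal{M},w\models\varphi$. *)

From Stdlib Require Import List.
Import ListNotations.
Set Implicit Arguments.

Section Syntax.
Variable At : Type.

Inductive pform : Type :=
| PTop : pform
| PAtom : At -> pform
| PNot : pform -> pform
| PAnd : pform -> pform -> pform.

Inductive form : Type :=
| FTop : form
| FAtom : At -> form
| FNot : form -> form
| FAnd : form -> form -> form
| FBox : form -> form
| FDag : pform -> form -> form
| FDagC : pform -> form -> form.      (* [†' π] φ  (conditional forgetting) *)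

Fixpoint emb (p : pform) : form :=
  match p with
  | PTop => FTop
  | PAtom a => FAtom a
  | PNot q => FNot (emb q)
  | PAnd q r => FAnd (emb q) (emb r)
  end.

Definition FImp (f g : form) : form := FNot (FAnd f (FNot g)).
Definition FIff (f g : form) : form := FAnd (FImp f g) (FImp g f).

(* Literals and clauses (a clause is a finite set of literals, here a list,
   read as a disjunction; the empty clause is bottom). *)
Inductive lit : Type := Pos : At -> lit | Neg : At -> lit.
Definition clause := list lit.

Definition lit_sat (v : At -> Prop) (l : lit) : Prop :=
  match l with Pos p => v p | Neg p => ~ v p end.
Definition clause_sat (v : At -> Prop) (D : clause) : Prop :=
  exists l, In l D /\ lit_sat v l.

Fixpoint psat (v : At -> Prop) (p : pform) : Prop :=
  match p with
  | PTop => True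
  | PAtom a => v a
  | PNot q => ~ psat v q
  | PAnd q r => psat v q /\ psat v r
  end.

Definition tautological (D : clause) : Prop :=
  exists p, In (Pos p) D /\ In (Neg p) D.

Definition entails_clause (pi : pform) (D : clause) : Prop :=
  forall v : At -> Prop, psat v pi -> clause_sat v D.

Definition proper_subclause (D' D : clause) : Prop :=
  (forall l, In l D' -> In l D) /\ ~ (forall l, In l D -> In l D').

Definition in_C (pi : pform) (D : clause) : Prop :=
  ~ tautological D /\ entails_clause pi D /\
  ~ (exists D', proper_subclause D' D /\ entails_clause pi D').

Record model : Type := Model {
  W : Type;
  W_ne : inhabited W;
  R : W -> W -> Prop;
  V : At -> W -> Prop
}.

Lemma upd_ne (M : model) : inhabited (W M * bool).
Proof. destruct (W_ne M) as [w]. exact (inhabits (w, false)). Qed.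

Definition upd (M : model) (D : clause) : model :=
  @Model (W M * bool) (upd_ne M)
    (fun x y => R M (fst x) (fst y))
    (fun p x => if snd x
                then In (Neg p) D \/
                     (~ In (Pos p) D /\ ~ In (Neg p) D /\ V M p (fst x))
                else V M p (fst x)).

Definition box_prop (M : model) (w : W M) (pi : pform) : Prop :=
  forall u, R M w u -> psat (fun a => V M a u) pi.

Fixpoint sat (f : form) (M : model) (w : W M) {struct f} : Prop :=
  match f with
  | FTop => True
  | FAtom a => V M a w
  | FNot g => ~ sat g M w
  | FAnd g h => sat g M w /\ sat h M w
  | FBox g => forall u, R M w u -> sat g M u
  | FDag pi g => forall D, in_C pi D -> sat g (upd M D) (w, false)
  | FDagC pi g =>
      (box_prop M w pi /\
         (forall D, in_C pi D -> sat g (upd M D) (w, false)))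
      \/ (~ box_prop M w pi /\ sat g M w)
  end.

Definition valid (f : form) : Prop :=
  forall (M : model) (w : W M), sat f M w.

End Syntax.

Definition countable (T : Type) : Prop :=
  exists f : T -> nat, forall x y, f x = f y -> x = y.

(* Conditional forgetting only acts at worlds where [Box pi] holds; elsewhere
   [[dagger' pi] phi] is [phi] by definition, which gives (1).  Unconditional
   forgetting of [a] acts regardless: in the update [M^({a})_u] every
   world also sees a copy of each of its successors in which [a] is false.  At a root with a
   dead-end [~a]-successor and a reflexive [a]-successor, [Box (a \/ Box False)]
   holds, but the copy of the reflexive successor falsifies [a \/ Box False]
   after the update, which gives (2). *)
From Stdlib Require Import List.
Import ListNotations.

Section Semantics.
Context {At : Type}.

Lemma sat_emb (p : pform At) (M : model At) (u : W M) :
  sat (emb p) M u <-> psat (fun a => V M a u) p.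
Proof. induction p; simpl; tauto. Qed.

Lemma sat_box_emb (pi : pform At) (M : model At) (w : W M) :
  sat (FBox (emb pi)) M w <-> box_prop M w pi.
Proof. split; intros Hbox u Hu; apply sat_emb; exact (Hbox u Hu). Qed.

Lemma sat_FImpI (f g : form At) (M : model At) (w : W M) :
  (sat f M w -> sat g M w) -> sat (FImp f g) M w.
Proof. simpl; tauto. Qed.

Lemma sat_FIffI (f g : form At) (M : model At) (w : W M) :
  (sat f M w <-> sat g M w) -> sat (FIff f g) M w.
Proof. simpl; tauto. Qed.

Lemma sat_FDagC_unboxed (pi : pform At) (phi : form At) (M : model At)
    (w : W M) :
  ~ box_prop M w pi -> (sat (FDagC pi phi) M w <-> sat phi M w).
Proof. simpl; tauto. Qed.

Lemma in_C_atom (a : At) : in_C (PAtom a) [Pos a].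
Proof.
  split; [|split].
  - intros [p [_ [Hneg | []]]]; discriminate.
  - intros v Hv; exists (Pos a); simpl; auto.
  - intros [D' [[Hsub Hnot] Hent]].
    destruct (Hent (fun _ => True) I) as [l [Hl _]].
    apply Hnot; intros l' [<- | []].
    destruct (Hsub l Hl) as [-> | []]; exact Hl.
Qed.

End Semantics.

Lemma valid_unboxed_iff_dagC {At : Type} (pi : pform At) (phi : form At) :
  valid (FImp (FNot (FBox (emb pi))) (FIff phi (FDagC pi phi))).
Proof.
  intros M w; apply sat_FImpI; intro Hunboxed.
  apply sat_FIffI; symmetry; apply sat_FDagC_unboxed.
  rewrite <- sat_box_emb; exact Hunboxed.
Qed.

Section Counterexample.
Context {At : Type} (a : At).

Inductive world := root | dead_end | loop.

Definition world_rel (x y : world) : Prop :=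
  match x, y with
  | root, dead_end | root, loop | loop, loop => True
  | _, _ => False
  end.

Definition counter_model : model At :=
  @Model At world (inhabits root) world_rel (fun _ x => x = loop).

Definition FBot : form At := FNot (FTop At).
Definition FOr (f g : form At) : form At := FNot (FAnd (FNot f) (FNot g)).

Definition a_or_blind : form At := FBox (FOr (FAtom a) (FBox FBot)).

Lemma counter_unboxed : ~ sat (FBox (emb (PAtom a))) counter_model root.
Proof. intro Hbox; discriminate (Hbox dead_end I). Qed.

Lemma counter_a_or_blind : sat a_or_blind counter_model root.
Proof.
  intros [] Hu [Hna Hnblind]; try contradiction.
  - now apply Hnblind; intros [].
  - now apply Hna.
Qed.

Lemma counter_forget_a_or_blind :
  ~ sat (FDag (PAtom a) a_or_blind) counter_model root.
Proof.
  intro Hdag.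
  apply (Hdag [Pos a] (in_C_atom a) (loop, true) I); split.
  - intros [[Hneg | []] | [Hpos _]]; [discriminate | now apply Hpos; left].
  - intro Hblind; exact (Hblind (loop, false) I I).
Qed.

Lemma not_valid_unboxed_iff_dag :
  ~ valid (FImp (FNot (FBox (emb (PAtom a))))
             (FIff a_or_blind (FDag (PAtom a) a_or_blind))).
Proof.
  intro Hvalid; apply (Hvalid counter_model root); split.
  - exact counter_unboxed.
  - intros [Hforget _]; apply Hforget; split.
    + exact counter_a_or_blind.
    + exact counter_forget_a_or_blind.
Qed.

End Counterexample.

Theorem proposition6 (At : Type) (At_countable : countable At)
  (At_nonempty : inhabited At) :
  (forall (pi : pform At) (phi : form At),
      valid (FImp (FNot (FBox (emb pi))) (FIff phi (FDagC pi phi)))) /\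
  (exists (pi : pform At) (phi : form At),
      ~ valid (FImp (FNot (FBox (emb pi))) (FIff phi (FDag pi phi)))).
Proof.
  split.
  - exact valid_unboxed_iff_dagC.
  - destruct At_nonempty as [a].
    exists (PAtom a), (a_or_blind a).
    exact (not_valid_unboxed_iff_dag a).
Qed.
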